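(* Let $\alpha\in\{0,1,2\}^*$ be a finite ternary string and let $c_\infty[\alpha]$ be the CQCA limit configuration on input $\alpha$. Let $e=(x_0,y_0)\in\mathbb{Z}^2$ be such that both cells $e+N$ and $e+W$ are defined in $c_\infty[\alpha]$ (an anchor cell). Then there exists $z\in\mathbb{N}$ such that: the cells $(x_0,y)$ with $y_0<y\le|\alpha|$ are all defined and give a base-$3'$ word $\gamma$ with $[\![\gamma]\!]_{3'}=z$; and the cells $(x,y_0)$ with $x<x_0$ all have defined sum bits $b_x$, only finitely many of which are $1$, with $\sum_{x<x_0}b_x\,2^{x_0-1-x}=z$ (i.e. the sum bits strictly west of $e$ on row $y_0$ form the base-2 representation of $z$, least significant bit at $e+W$).
   Context: Notation: $E=(1,0)$, $W=(-1,0)$, $N=(0,1)$, $S=(0,-1)$ in $\mathbb{Z}^2$; $[P]\in\{0,1\}$ equals $1$ iff $P$ holds. Strings are indexed from the right. Base $3'$: words over $\{0,\bar0,1,\bar1\}$ with trit values $0\mapsto0$, $\bar0\mapsto1$, $1\mapsto1$, $\bar1\mapsto2$, and $[\![\gamma]\!]_{3'}=\sum_i\mathrm{val}(\gamma_i)3^i$. The symbols $0,\bar0,1,\bar1$ are identified with the cell states $(0,0),(0,1),(1,0),(1,1)$. The encoding $\mathrm{enc}:\{0,1,2\}^*\to\{0,\bar0,1,\bar1\}^*$ acts symbol by symbol: $0\mapsto0$, $2\mapsto\bar1$, and a digit $\alpha_i=1$ maps to $1$ if there exists $j<i$ with $\alpha_j\ne1$ and the largest such $j$ has $\alpha_j=2$,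 and to $\bar0$ otherwise. A vertical contiguous segment of defined cells gives the base-$3'$ word formed by the cells' states read from north (most significant) to south (least significant). The CQCA. State set $\Sigma=\{0,1,\bot\}^2\setminus\{(\bot,0),(\bot,1)\}$; a state $(s,c)$ has sum bit $s$ and carry bit $c$; it is undefined if $(\bot,\bot)$, half-defined if $s\in\{0,1\},c=\bot$, defined if $s,c\in\{0,1\}$. One step $F(C)$ of a configuration $C:\mathbb{Z}^2\to\Sigma$: first the non-local rule gives $C'$: $C'(u)=(0,1)$ if $C(u+W)=(1,\bot)$, $C(u)\in\{(0,\bot),(\bot,\bot)\}$ and $C(u+iE)\in\{(0,\bot),(\bot,\bot)\}$ for all $i\ge1$; otherwise $C'(u)=C(u)$. Then the local rule on $C'$ at all cells simultaneously: (i) if $C'(u)=(s,\bot)$ half-defined and $C'(u+E)=(s',c')$ defined, $F(C)(u)=(s,[s+s'+c'\ge2])$; (ii) if $C'(u)=(\bot,\bot)$, $C'(u+N)=(s,\bot)$ half-defined and $C'(u+N+E)=(s',c')$ defined, $F(C)(u)=((s+s'+c')\bmod2,\bot)$; (iii) otherwise $F(C)(u)=C'(u)$. For $\alpha\in\{0,1,2\}^*$ with $\gamma=\mathrm{enc}(\alpha)$, the initial configuration $c_0[\alpha]$ is: $c_0[\alpha](0,i)=\gamma_{i-1}$ for $1\le i\le|\alpha|$, $c_0[\alpha](x,|\alpha|)=(0,\bot)$ for all $x<0$, and $(\bot,\bot)$ elsewhere. Each cell's state in $F^i(c_0[\alpha])$ is eventually constant; $c_\infty[\alpha]$ is the pointwise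 limit. *)

From Stdlib Require Import ZArith List Bool Arith Lia ClassicalEpsilon.
Import ListNotations.
Open Scope Z_scope.

Inductive trit : Type := T0 | T1 | T2.

(* A string alpha is a list written left to right (most significant first);
   strings are indexed from the right: alpha_i = nth (|alpha|-1-i). *)
Definition tstr := list trit.
Definition at_r {A} (d : A) (s : list A) (i : nat) : A :=
  nth (length s - 1 - i)%nat s d.

(* Undef = (bot,bot), Half s = (s,bot), Def s c = (s,c) *)
Inductive cell : Type :=
| Undef : cell
| Half : bool -> cell
| Def : bool -> bool -> cell.

Definition is_defined (s : cell) : Prop := exists b c, s = Def b c.

Definition sum_bit (s : cell) : option bool :=
  match s with Undef => None | Half b => Some b | Def b _ => Some b end.

(* symbols 0, bar0, 1, bar1 = (0,0),(0,1),(1,0),(1,1); trit value s + c *)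
Definition b2n (b : bool) : nat := if b then 1%nat else 0%nat.
Definition trit_val (s : cell) : nat :=
  match s with Def b c => (b2n b + b2n c)%nat | _ => 0%nat end.

Definition val3 (w : list cell) : nat :=
  fold_left (fun acc s => (3 * acc + trit_val s)%nat) w 0%nat.

Fixpoint last_non1 (a : tstr) (i : nat) : option trit :=
  match i with
  | O => None
  | S k => match at_r T0 a k with
           | T1 => last_non1 a k
           | t => Some t
           end
  end.

Definition enc_at (a : tstr) (i : nat) : cell :=
  match at_r T0 a i with
  | T0 => Def false false
  | T2 => Def true true
  | T1 => match last_non1 a i with
          | Some T2 => Def true false
          | _ => Def false true
          end
  end.

Definition config := Z * Z -> cell.
Definition addv (u v : Z * Z) : Z * Z := (fst u + fst v, snd u + snd v).
Definition vE : Z * Z := (1, 0).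
Definition vW : Z * Z := (-1, 0).
Definition vN : Z * Z := (0, 1).
Definition vS : Z * Z := (0, -1).

Definition zeroish (s : cell) : Prop := s = Half false \/ s = Undef.

Definition nonlocal_cond (C : config) (u : Z * Z) : Prop :=
  C (addv u vW) = Half true /\ zeroish (C u) /\
  forall i : Z, 1 <= i -> zeroish (C (addv u (i, 0))).

Definition nonlocal (C : config) : config := fun u =>
  if excluded_middle_informative (nonlocal_cond C u) then Def false true else C u.

Definition local (C' : config) : config := fun u =>
  match C' u with
  | Half s =>
      match C' (addv u vE) with
      | Def s' c' => Def s (2 <=? b2n s + b2n s' + b2n c')%nat
      | _ => C' u
      end
  | Undef =>
      match C' (addv u vN), C' (addv (addv u vN) vE) with
      | Half s, Def s' c' => Half (Nat.odd (b2n s + b2n s' + b2n c'))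
      | _, _ => C' u
      end
  | Def _ _ => C' u
  end.

Definition F (C : config) : config := local (nonlocal C).

Definition c0 (a : tstr) : config := fun u =>
  let n := Z.of_nat (length a) in
  let (x, y) := u in
  if (x =? 0) && (1 <=? y) && (y <=? n) then enc_at a (Z.to_nat (y - 1))
  else if (x <? 0) && (y =? n) then Half false
  else Undef.

Definition eventually_const (a : tstr) (u : Z * Z) (s : cell) : Prop :=
  exists n : nat, forall m : nat, (n <= m)%nat -> Nat.iter m F (c0 a) u = s.

(* c_infty[alpha]: the pointwise limit (each cell is eventually constant, as
   stated in the paper; Undef is a never-used default otherwise). *)
Definition c_inf (a : tstr) : config := fun u =>
  match excluded_middle_informative (exists s, eventually_const a u s) with
  | left H => proj1_sig (constructive_indefinite_description _ H)
  | right _ => Undef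
  end.

Definition column_word (C : config) (x0 y0 top : Z) : list cell :=
  map (fun k : nat => C (x0, top - Z.of_nat k)) (seq 0 (Z.to_nat (top - y0))).

Fixpoint sum_nat (f : nat -> nat) (K : nat) : nat :=
  match K with O => O | S k => (sum_nat f k + f k)%nat end.

From Stdlib Require Import ZArith List Arith Lia Classical ClassicalEpsilon.
Open Scope Z_scope.

(** Every step of the automaton only refines cells along the order
    [Undef < Half b < Def b c], so each cell stabilises and [c_inf] is the limit
    of the trajectory.  An invariant [Inv] (the shape of the region reached by
    the dynamics) holds initially and is preserved by a step.  From it we show
    that in the limit a column that is defined from row [y0+1] up to the top row
    sits to the right of rows of *full adders*: every cell west of the column is
    defined, its carry is the majority of its sum bit and the east neighbour's
    two bits, and the cell below gets their parity.  The non-local rule cannot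
    have produced such cells, because it needs zeroes east of the firing cell,
    and those zeroes would persist forever ([zeroes_persist]).  Finally a purely
    arithmetic lemma ([ripple_value]) shows that a stack of such adder rows,
    seeded with a zero top row, turns row [j] into [3 * row (j-1) + trit j]:
    the bottom row is the base-2 expansion of the base-3' value of the column. *)

Notation height a := (Z.of_nat (length a)).

(** A cell state is defined, in a form that computes by case analysis. *)
Definition isDef (s : cell) : Prop := match s with Def _ _ => True | _ => False end.

Lemma isDef_is_defined (s : cell) : isDef s <-> is_defined s.
Proof.
  split.
  - destruct s as [|b|b c]; simpl; try tauto. intros _. exists b, c. reflexivity.
  - intros [b [c ->]]. exact I.
Qed.

Lemma isDef_dec (s : cell) : isDef s \/ ~ isDef s.
Proof. destruct s; simpl; tauto. Qed.

Lemma addv_E x y : addv (x,y) vE = (x+1, y). Proof. unfold addv; simpl; f_equal; lia. Qed.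
Lemma addv_W x y : addv (x,y) vW = (x-1, y). Proof. unfold addv; simpl; f_equal; lia. Qed.
Lemma addv_N x y : addv (x,y) vN = (x, y+1). Proof. unfold addv; simpl; f_equal; lia. Qed.
Lemma addv_NE x y : addv (addv (x,y) vN) vE = (x+1, y+1). Proof. unfold addv; simpl; f_equal; lia. Qed.

Lemma nonlocal_fires C u : nonlocal_cond C u -> nonlocal C u = Def false true.
Proof. intro H. unfold nonlocal. destruct excluded_middle_informative; tauto. Qed.

Lemma nonlocal_idle C u : ~ nonlocal_cond C u -> nonlocal C u = C u.
Proof. intro H. unfold nonlocal. destruct excluded_middle_informative; tauto. Qed.

Lemma nonlocal_cond_west C x y : nonlocal_cond C (x,y) -> C (x-1,y) = Half true.
Proof. intros [H _]. rewrite addv_W in H. exact H. Qed.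

Lemma nonlocal_cond_zeroish C u : nonlocal_cond C u -> zeroish (C u).
Proof. intros [_ [H _]]. exact H. Qed.

Lemma nonlocal_half C u s : nonlocal C u = Half s -> C u = Half s.
Proof.
  intro H. destruct (classic (nonlocal_cond C u)) as [Hc|Hc].
  - rewrite nonlocal_fires in H by exact Hc. discriminate.
  - rewrite nonlocal_idle in H by exact Hc. exact H.
Qed.

Lemma nonlocal_def_inv C u b c : nonlocal C u = Def b c ->
  C u = Def b c \/ (nonlocal_cond C u /\ b = false /\ c = true).
Proof.
  intro H. destruct (classic (nonlocal_cond C u)) as [Hc|Hc].
  - rewrite nonlocal_fires in H by exact Hc. injection H as <- <-. right; auto.
  - rewrite nonlocal_idle in H by exact Hc. left; exact H.
Qed.

Lemma nonlocal_keeps_def C u b c : C u = Def b c -> nonlocal C u = Def b c.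
Proof.
  intro H. rewrite nonlocal_idle; auto.
  intros Hc. destruct (nonlocal_cond_zeroish _ _ Hc) as [E|E]; congruence.
Qed.

Lemma local_def N u b c : N u = Def b c -> local N u = Def b c.
Proof. intro H. unfold local. rewrite H. reflexivity. Qed.

(** Local rule (i): a half-defined cell acquires the carry of a full adder. *)
Lemma local_half_def N u s s' c' : N u = Half s -> N (addv u vE) = Def s' c' ->
  local N u = Def s (2 <=? b2n s + b2n s' + b2n c')%nat.
Proof. intros H1 H2. unfold local. rewrite H1, H2. reflexivity. Qed.

(** Local rule (ii): an undefined cell acquires the sum bit of a full adder. *)
Lemma local_undef N u s s' c' : N u = Undef -> N (addv u vN) = Half s ->
  N (addv (addv u vN) vE) = Def s' c' -> local N u = Half (Nat.odd (b2n s + b2n s' + b2n c')).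
Proof. intros H1 H2 H3. unfold local. rewrite H1, H2, H3. reflexivity. Qed.

Lemma F_cases C u :
  (nonlocal_cond C u /\ F C u = Def false true)
  \/ (~ nonlocal_cond C u /\ exists s s' c', C u = Half s /\ nonlocal C (addv u vE) = Def s' c'
        /\ F C u = Def s (2 <=? b2n s + b2n s' + b2n c')%nat)
  \/ (~ nonlocal_cond C u /\ C u = Undef /\ exists s s' c', nonlocal C (addv u vN) = Half s
        /\ nonlocal C (addv (addv u vN) vE) = Def s' c'
        /\ F C u = Half (Nat.odd (b2n s + b2n s' + b2n c')))
  \/ F C u = C u.
Proof.
  destruct (classic (nonlocal_cond C u)) as [H|H].
  - left. split; auto. unfold F. apply local_def, nonlocal_fires, H.
  - unfold F, local. rewrite (nonlocal_idle C u H). destruct (C u) eqn:E.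
    + destruct (nonlocal C (addv u vN)) eqn:E1; auto.
      destruct (nonlocal C (addv (addv u vN) vE)) eqn:E2; auto.
      right; right; left. repeat split; auto. exists b, b0, b1. auto.
    + destruct (nonlocal C (addv u vE)) eqn:E1; auto.
      right; left. split; auto. exists b, b0, b1. auto.
    + auto.
Qed.

Ltac step_cases C x y :=
  let Hc := fresh "Hc" in let Hf := fresh "Hf" in let Hu := fresh "Hu" in
  let s := fresh "s" in let s' := fresh "s'" in let c' := fresh "c'" in
  let H1 := fresh "H1" in let H2 := fresh "H2" in
  destruct (F_cases C (x,y)) as
    [[Hc Hf]|[[Hc [s [s' [c' [H1 [H2 Hf]]]]]]|[[Hc [Hu [s [s' [c' [H1 [H2 Hf]]]]]]]|Hf]]];
  repeat (progress (rewrite ?addv_NE, ?addv_E, ?addv_N in *)).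

Lemma F_of_nonlocal_def C u b c : nonlocal C u = Def b c -> F C u = Def b c.
Proof. intro H. unfold F. apply local_def, H. Qed.

Lemma F_keeps_def C u b c : C u = Def b c -> F C u = Def b c.
Proof. intro H. apply F_of_nonlocal_def, nonlocal_keeps_def, H. Qed.

Lemma F_isDef C u : isDef (C u) -> isDef (F C u).
Proof. destruct (C u) eqn:E; simpl; try tauto. intros _. rewrite (F_keeps_def C u b b0 E). exact I. Qed.

(** The invariant of every configuration reached from an initial configuration
    of height [n]: nothing lives east of the input column or above row [n],
    the top row carries only sum bits 0, and the "frontier" of defined cells
    has the staircase shape that the local rules produce. *)
Record Inv (n : Z) (C : config) : Prop := {
  inv_east_undef : forall x y, 1 <= x -> C (x,y) = Undef;
  inv_axis_not_half : forall y s, C (0,y) <> Half s;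
  inv_above_undef : forall x y, n < y -> C (x,y) = Undef;
  inv_top_row : forall x, x < 0 -> C (x,n) = Half false \/ exists c, C (x,n) = Def false c;
  inv_north_def : forall x y, x <= 0 -> y < n -> C (x,y) <> Undef -> isDef (C (x,y+1));
  inv_northeast_def : forall x y, x < 0 -> y < n -> C (x,y) <> Undef -> isDef (C (x+1,y+1));
  (* below the western end of a defined stretch there is no pending [Half true] *)
  inv_no_trigger : forall x y, x < 0 -> isDef (C (x,y+1)) -> ~ isDef (C (x+1,y+1)) ->
                   C (x-1,y) <> Half true;
  (* the eastern end of a defined stretch has a defined west neighbour *)
  inv_frontier : forall x y, x < 0 -> isDef (C (x,y)) -> ~ isDef (C (x+1,y)) ->
                 isDef (C (x-1,y)) }.

Arguments inv_east_undef {n C}.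
Arguments inv_axis_not_half {n C}.
Arguments inv_above_undef {n C}.
Arguments inv_top_row {n C}.
Arguments inv_north_def {n C}.
Arguments inv_northeast_def {n C}.
Arguments inv_no_trigger {n C}.
Arguments inv_frontier {n C}.

Section InvariantStep.

Variables (n : Z) (C : config).
Hypothesis HC : Inv n C.

Lemma F_east_undef x y : 1 <= x -> F C (x,y) = Undef.
Proof.
  intros Hx. step_cases C x y.
  - apply nonlocal_cond_west in Hc. destruct (Z.eq_dec x 1) as [->|].
    + exfalso. replace (1-1) with 0 in Hc by lia. exact (inv_axis_not_half HC _ _ Hc).
    + rewrite (inv_east_undef HC) in Hc by lia. discriminate.
  - rewrite (inv_east_undef HC) in H1 by lia. discriminate.
  - apply nonlocal_half in H1. rewrite (inv_east_undef HC) in H1 by lia. discriminate.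
  - rewrite Hf. apply (inv_east_undef HC), Hx.
Qed.

Lemma F_axis_not_half y s : F C (0,y) <> Half s.
Proof.
  intro H. step_cases C 0 y; rewrite H in Hf; try discriminate.
  - apply nonlocal_half in H1. exact (inv_axis_not_half HC _ _ H1).
  - exact (inv_axis_not_half HC _ _ (eq_sym Hf)).
Qed.

Lemma F_above_undef x y : n < y -> F C (x,y) = Undef.
Proof.
  intros Hy. step_cases C x y.
  - apply nonlocal_cond_west in Hc. rewrite (inv_above_undef HC) in Hc by lia. discriminate.
  - rewrite (inv_above_undef HC) in H1 by lia. discriminate.
  - apply nonlocal_half in H1. rewrite (inv_above_undef HC) in H1 by lia. discriminate.
  - rewrite Hf. apply (inv_above_undef HC), Hy.
Qed.

Lemma F_top_row x : x < 0 -> F C (x,n) = Half false \/ exists c, F C (x,n) = Def false c.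
Proof.
  intros Hx. step_cases C x n.
  - apply nonlocal_cond_west in Hc.
    destruct (inv_top_row HC (x-1)) as [E|[c E]]; [lia| |]; congruence.
  - destruct (inv_top_row HC x Hx) as [E|[c E]]; rewrite E in H1; try discriminate.
    injection H1 as <-. right; eauto.
  - destruct (inv_top_row HC x Hx) as [E|[c E]]; congruence.
  - rewrite Hf. apply (inv_top_row HC x Hx).
Qed.

Lemma F_north_def x y : x <= 0 -> y < n -> F C (x,y) <> Undef -> isDef (F C (x,y+1)).
Proof.
  intros Hx Hy Hn. step_cases C x y.
  - apply nonlocal_cond_west in Hc.
    assert (D := inv_northeast_def HC (x-1) y ltac:(lia) Hy ltac:(congruence)).
    replace (x-1+1) with x in D by lia. apply F_isDef, D.
  - apply F_isDef, (inv_north_def HC); auto; congruence.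
  - unfold F. rewrite (local_half_def _ (x,y+1) s s' c'); simpl; auto. rewrite addv_E; auto.
  - rewrite Hf in Hn. apply F_isDef, (inv_north_def HC); auto.
Qed.

Lemma F_northeast_def x y : x < 0 -> y < n -> F C (x,y) <> Undef -> isDef (F C (x+1,y+1)).
Proof.
  intros Hx Hy Hn. step_cases C x y.
  - apply nonlocal_cond_west in Hc.
    assert (D := inv_northeast_def HC (x-1) y ltac:(lia) Hy ltac:(congruence)).
    replace (x-1+1) with x in D by lia.
    destruct (isDef_dec (C (x+1,y+1))) as [D2|D2]; [apply F_isDef, D2|].
    exfalso. exact (inv_no_trigger HC x y Hx D D2 Hc).
  - apply F_isDef, (inv_northeast_def HC); auto; congruence.
  - rewrite (F_of_nonlocal_def _ _ _ _ H2). exact I.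
  - rewrite Hf in Hn. apply F_isDef, (inv_northeast_def HC); auto.
Qed.

(** A west neighbour [Half true] below an undefined cell could only have been
    created there by rule (ii), which needs the north-east cell defined. *)
Lemma F_no_trigger x y : x < 0 -> isDef (F C (x,y+1)) -> ~ isDef (F C (x+1,y+1)) ->
  F C (x-1,y) <> Half true.
Proof.
  intros Hx HDf HND HD.
  assert (ND : ~ isDef (C (x+1,y+1))) by (intro Q; apply HND, F_isDef, Q).
  step_cases C (x-1) y.
  - rewrite Hf in HD; discriminate.
  - rewrite Hf in HD; discriminate.
  - replace (x-1+1) with x in * by lia.
    destruct (nonlocal_def_inv _ _ _ _ H2) as [E|[Ec [-> ->]]].
    + assert (Q := inv_frontier HC x (y+1) Hx ltac:(rewrite E; exact I) ND).
      apply nonlocal_half in H1. rewrite H1 in Q. exact Q.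
    + apply nonlocal_cond_west in Ec. apply nonlocal_half in H1. rewrite H1 in Ec.
      injection Ec as ->. rewrite Hf in HD. discriminate.
  - rewrite Hf in HD. step_cases C x (y+1).
    + apply nonlocal_cond_west in Hc. destruct (Z_lt_le_dec y n).
      * assert (Q := inv_north_def HC (x-1) y ltac:(lia) l ltac:(congruence)).
        rewrite Hc in Q. exact Q.
      * destruct (Z.eq_dec y n) as [->|].
        -- destruct (inv_top_row HC (x-1)) as [E|[c E]]; [lia| |]; congruence.
        -- rewrite (inv_above_undef HC) in HD by lia. discriminate.
    + apply HND. match goal with
        | H : nonlocal C (x+1,y+1) = Def _ _ |- _ => rewrite (F_of_nonlocal_def _ _ _ _ H)
      end. exact I.
    + rewrite Hf0 in HDf. exact HDf.
    + rewrite Hf0 in HDf. exact (inv_no_trigger HC x y Hx HDf ND HD).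
Qed.

(** A new eastern end created by the non-local rule has the [Half true] cell
    west of it, which rule (i) completes in the same step. *)
Lemma F_frontier x y : x < 0 -> isDef (F C (x,y)) -> ~ isDef (F C (x+1,y)) ->
  isDef (F C (x-1,y)).
Proof.
  intros Hx HD HND.
  assert (ND : ~ isDef (C (x+1,y))) by (intro Q; apply HND, F_isDef, Q).
  step_cases C x y.
  - assert (Hn : nonlocal C (x,y) = Def false true) by (apply nonlocal_fires, Hc).
    apply nonlocal_cond_west in Hc.
    assert (Hm : nonlocal C (x-1,y) = Half true).
    { rewrite nonlocal_idle; auto. intros Hc'.
      destruct (nonlocal_cond_zeroish _ _ Hc') as [E|E]; congruence. }
    assert (He : nonlocal C (addv (x-1,y) vE) = Def false true).
    { rewrite addv_E. replace (x-1+1) with x by lia. exact Hn. }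
    unfold F. rewrite (local_half_def _ (x-1,y) true false true Hm He). exact I.
  - exfalso. apply HND. rewrite (F_of_nonlocal_def _ _ _ _ H2). exact I.
  - rewrite Hf in HD. destruct HD.
  - rewrite Hf in HD. apply F_isDef, (inv_frontier HC); auto.
Qed.

Lemma Inv_F : Inv n (F C).
Proof.
  constructor.
  - exact F_east_undef.
  - exact F_axis_not_half.
  - exact F_above_undef.
  - exact F_top_row.
  - exact F_north_def.
  - exact F_northeast_def.
  - exact F_no_trigger.
  - exact F_frontier.
Qed.

End InvariantStep.

Lemma enc_isDef a i : isDef (enc_at a i).
Proof.
  unfold enc_at. destruct (at_r T0 a i); simpl; auto.
  destruct (last_non1 a i) as [[| |]|]; simpl; auto.
Qed.

Lemma c0_cases a x y :
  (x = 0 /\ 1 <= y <= height a /\ isDef (c0 a (x,y)))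
  \/ (x < 0 /\ y = height a /\ c0 a (x,y) = Half false)
  \/ (~ (x = 0 /\ 1 <= y <= height a) /\ ~ (x < 0 /\ y = height a)
      /\ c0 a (x,y) = Undef).
Proof.
  unfold c0. destruct (Z.eqb_spec x 0); destruct (Z.leb_spec 1 y);
  destruct (Z.leb_spec y (height a)); destruct (Z.ltb_spec x 0);
  destruct (Z.eqb_spec y (height a)); simpl;
  try (left; repeat split; try lia; apply enc_isDef);
  try (right; left; repeat split; lia);
  right; right; repeat split; lia.
Qed.


Lemma Inv_c0 a : Inv (height a) (c0 a).
Proof.
  constructor.
  - intros x y Hx. destruct (c0_cases a x y) as [[? _]|[[? _]|[_ [_ E]]]]; auto; lia.
  - intros y s H. destruct (c0_cases a 0 y) as [[_ [_ D]]|[[? _]|[_ [_ E]]]];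
      try lia; rewrite H in *; try discriminate; destruct D.
  - intros x y Hy. destruct (c0_cases a x y) as [[_ [? _]]|[[_ [? _]]|[_ [_ E]]]]; auto; lia.
  - intros x Hx. destruct (c0_cases a x (height a)) as [[? _]|[[_ [_ E]]|[_ [H _]]]]; auto; lia.
  - intros x y Hx Hy Hn.
    destruct (c0_cases a x y) as [[-> [? D]]|[[_ [? _]]|[_ [_ E]]]]; try lia; try congruence.
    destruct (c0_cases a 0 (y+1)) as [[_ [_ D2]]|[[? _]|[H9 _]]]; auto; lia.
  - intros x y Hx Hy Hn. destruct (c0_cases a x y) as [[? _]|[[_ [? _]]|[_ [_ E]]]]; try lia; congruence.
  - intros x y Hx HD. destruct (c0_cases a x (y+1)) as [[? _]|[[_ [_ E]]|[_ [_ E]]]];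
      try lia; rewrite E in HD; destruct HD.
  - intros x y Hx HD. destruct (c0_cases a x y) as [[? _]|[[_ [_ E]]|[_ [_ E]]]];
      try lia; rewrite E in HD; destruct HD.
Qed.

Definition traj (a : tstr) (t : nat) : config := Nat.iter t F (c0 a).

Lemma traj_S a t : traj a (S t) = F (traj a t).
Proof. reflexivity. Qed.

Lemma traj_Inv a t : Inv (height a) (traj a t).
Proof. induction t as [|t IH]. apply Inv_c0. rewrite traj_S. apply Inv_F, IH. Qed.

Definition le_cell (s1 s2 : cell) : Prop :=
  match s1 with
  | Undef => True
  | Half b => s2 = Half b \/ exists c, s2 = Def b c
  | Def b c => s2 = Def b c
  end.

Lemma le_cell_refl s : le_cell s s. Proof. destruct s; simpl; auto. Qed.

Lemma le_cell_trans s1 s2 s3 : le_cell s1 s2 -> le_cell s2 s3 -> le_cell s1 s3.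
Proof.
  destruct s1 as [|b|b c]; simpl; intros H1 H2; auto.
  - destruct H1 as [->|[c ->]]; simpl in H2; auto. right; exists c; auto.
  - subst. exact H2.
Qed.

Lemma F_mono C u : le_cell (C u) (F C u).
Proof.
  destruct (F_cases C u) as [[Hc Hf]|[[Hc [s [s' [c' [H1 [H2 Hf]]]]]]|[[Hc [Hu _]]|Hf]]].
  - destruct (nonlocal_cond_zeroish _ _ Hc) as [E|E]; rewrite E, Hf; simpl; eauto.
  - rewrite H1, Hf; simpl; eauto.
  - rewrite Hu; simpl; auto.
  - rewrite Hf; apply le_cell_refl.
Qed.

Lemma traj_mono a t t' u : (t <= t')%nat -> le_cell (traj a t u) (traj a t' u).
Proof.
  intro H. induction H as [|t' _ IH]; [apply le_cell_refl|].
  apply (le_cell_trans _ _ _ IH). rewrite traj_S. apply F_mono.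
Qed.

(** Monotone sequences in a three-level order stabilise, so [c_inf] really is
    the limit of the trajectory. *)
Lemma traj_eventually_const a u : exists N s, forall m, (N <= m)%nat -> traj a m u = s.
Proof.
  destruct (classic (exists t, isDef (traj a t u))) as [[t Ht]|Hn].
  - destruct (traj a t u) as [| |b c] eqn:E; try destruct Ht.
    exists t, (Def b c). intros m Hm. assert (Q := traj_mono a t m u Hm). rewrite E in Q. exact Q.
  - destruct (classic (exists t b, traj a t u = Half b)) as [[t [b Ht]]|Hn2].
    + exists t, (Half b). intros m Hm. assert (Q := traj_mono a t m u Hm). rewrite Ht in Q.
      destruct Q as [Q|[c Q]]; auto. exfalso; apply Hn; exists m; rewrite Q; exact I.
    + exists 0%nat, Undef. intros m _. destruct (traj a m u) eqn:E; auto.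
      * exfalso; apply Hn2; eauto.
      * exfalso; apply Hn; exists m; rewrite E; exact I.
Qed.

Lemma c_inf_spec a u : exists N, forall m, (N <= m)%nat -> traj a m u = c_inf a u.
Proof.
  unfold c_inf. destruct excluded_middle_informative as [H|H].
  - destruct (constructive_indefinite_description _ H) as [s [N HN]]. exists N. exact HN.
  - exfalso. apply H. destruct (traj_eventually_const a u) as [N [s HN]]. exists s, N. exact HN.
Qed.

Lemma c_inf_spec2 a u v :
  exists N, forall m, (N <= m)%nat -> traj a m u = c_inf a u /\ traj a m v = c_inf a v.
Proof.
  destruct (c_inf_spec a u) as [N1 H1]. destruct (c_inf_spec a v) as [N2 H2].
  exists (max N1 N2). intros m Hm. split; [apply H1|apply H2]; lia.
Qed.

Lemma traj_le_c_inf a t u : le_cell (traj a t u) (c_inf a u).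
Proof.
  destruct (c_inf_spec a u) as [N HN]. rewrite <- (HN (max t N)) by lia. apply traj_mono. lia.
Qed.

Lemma c_inf_of_def a t u : isDef (traj a t u) -> c_inf a u = traj a t u.
Proof.
  intro H. assert (Q := traj_le_c_inf a t u). destruct (traj a t u); try destruct H. exact Q.
Qed.

Lemma c_inf_of_half a t u b : traj a t u = Half b -> sum_bit (c_inf a u) = Some b.
Proof.
  intro H. assert (Q := traj_le_c_inf a t u). rewrite H in Q.
  destruct Q as [->|[c ->]]; reflexivity.
Qed.

Lemma c_inf_east_undef a x y : 1 <= x -> c_inf a (x,y) = Undef.
Proof.
  intro H. destruct (c_inf_spec a (x,y)) as [N HN]. rewrite <- (HN N) by lia.
  apply (inv_east_undef (traj_Inv a N)), H.
Qed.

Lemma c_inf_above_undef a x y : height a < y -> c_inf a (x,y) = Undef.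
Proof.
  intro H. destruct (c_inf_spec a (x,y)) as [N HN]. rewrite <- (HN N) by lia.
  apply (inv_above_undef (traj_Inv a N)), H.
Qed.

Lemma c_inf_north_def a x y : x <= 0 -> y < height a -> c_inf a (x,y) <> Undef ->
  isDef (c_inf a (x,y+1)).
Proof.
  intros H1 H2 H3. destruct (c_inf_spec2 a (x,y) (x,y+1)) as [N HN].
  destruct (HN N (le_n _)) as [E1 E2]. rewrite <- E2.
  apply (inv_north_def (traj_Inv a N)); auto. rewrite E1; exact H3.
Qed.

Lemma c_inf_top_row a x : x < 0 ->
  c_inf a (x, height a) <> Undef /\ sum_bit (c_inf a (x, height a)) = Some false.
Proof.
  intro H. destruct (c_inf_spec a (x, height a)) as [N HN]. rewrite <- (HN N) by lia.
  destruct (inv_top_row (traj_Inv a N) x H) as [E|[c E]]; rewrite E; split; auto; discriminate.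
Qed.

(** In the limit a half-defined cell has no defined east neighbour, since
    otherwise rule (i) would still apply to it. *)
Lemma c_inf_half_east a x y s : c_inf a (x,y) = Half s -> ~ isDef (c_inf a (x+1,y)).
Proof.
  intros H HD. destruct (c_inf_spec2 a (x,y) (x+1,y)) as [N HN].
  destruct (HN N (le_n _)) as [E1 E2]. destruct (HN (S N) (le_S _ _ (le_n _))) as [E3 _].
  rewrite traj_S in E3. set (C := traj a N) in *.
  destruct (classic (nonlocal_cond C (x,y))) as [Hc|Hc].
  - unfold F in E3. rewrite (local_def _ _ false true (nonlocal_fires _ _ Hc)) in E3. congruence.
  - rewrite <- E2 in HD. destruct (C (x+1,y)) as [| |b c] eqn:E4; try destruct HD.
    assert (Q : nonlocal C (addv (x,y) vE) = Def b c)
      by (rewrite addv_E; apply nonlocal_keeps_def; auto).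
    assert (Q2 : nonlocal C (x,y) = Half s) by (rewrite nonlocal_idle; auto; congruence).
    unfold F in E3. rewrite (local_half_def _ (x,y) s _ _ Q2 Q) in E3. congruence.
Qed.

Definition full_adder_cell (a : tstr) (x y : Z) : Prop :=
  exists s c s' c', c_inf a (x,y) = Def s c /\ c_inf a (x+1,y) = Def s' c'
   /\ c = (2 <=? b2n s + b2n s' + b2n c')%nat
   /\ sum_bit (c_inf a (x,y-1)) = Some (Nat.odd (b2n s + b2n s' + b2n c'))
   /\ (forall t, isDef (traj a t (x,y)) -> traj a t (x,y-1) <> Undef).

Lemma first_time (P : nat -> Prop) N : ~ P 0%nat -> P N -> exists t, ~ P t /\ P (S t).
Proof.
  intros H0. induction N as [|N IH]; intro HN; [contradiction|].
  destruct (classic (P N)); eauto.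
Qed.

Lemma defined_cell_origin a x y : x < 0 -> y <= height a -> isDef (c_inf a (x,y)) ->
  full_adder_cell a x y \/ exists t, nonlocal_cond (traj a t) (x,y).
Proof.
  intros Hx Hy HD. destruct (c_inf_spec a (x,y)) as [N HN].
  assert (HDN : isDef (traj a N (x,y))) by (rewrite HN; auto).
  assert (H0 : ~ isDef (traj a 0 (x,y))).
  { change (traj a 0 (x,y)) with (c0 a (x,y)).
    destruct (c0_cases a x y) as [[? _]|[[_ [_ E]]|[_ [_ E]]]]; try lia; rewrite E; simpl; auto. }
  destruct (first_time (fun t => isDef (traj a t (x,y))) N H0 HDN) as [t [Ht1 Ht2]].
  assert (Iv := traj_Inv a t). cbv beta in Ht1, Ht2. rewrite traj_S in Ht2. set (C := traj a t) in *.
  step_cases C x y.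
  - right; exists t; auto.
  - left. exists s, (2 <=? b2n s + b2n s' + b2n c')%nat, s', c'.
    assert (Below : C (x,y-1) = Undef).
    { destruct (classic (C (x,y-1) = Undef)) as [E|E]; auto.
      assert (Q := inv_north_def Iv x (y-1) ltac:(lia) ltac:(lia) E).
      replace (y-1+1) with y in Q by lia. rewrite H1 in Q. destruct Q. }
    assert (NoFire : ~ nonlocal_cond C (x,y-1)).
    { intro Q. apply nonlocal_cond_west in Q.
      assert (Q2 := inv_northeast_def Iv (x-1) (y-1) ltac:(lia) ltac:(lia) ltac:(congruence)).
      replace (x-1+1) with x in Q2 by lia. replace (y-1+1) with y in Q2 by lia.
      rewrite H1 in Q2. destruct Q2. }
    assert (Fb : F C (x,y-1) = Half (Nat.odd (b2n s + b2n s' + b2n c'))).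
    { unfold F. apply local_undef.
      - rewrite nonlocal_idle; auto.
      - rewrite addv_N. replace (y-1+1) with y by lia. rewrite nonlocal_idle; auto.
      - rewrite addv_NE. replace (y-1+1) with y by lia. auto. }
    repeat split.
    + rewrite (c_inf_of_def a (S t) (x,y)); rewrite traj_S; fold C; rewrite Hf; auto. exact I.
    + rewrite (c_inf_of_def a (S t) (x+1,y)); rewrite traj_S; fold C;
        rewrite (F_of_nonlocal_def _ _ _ _ H2); auto. exact I.
    + apply (c_inf_of_half a (S t)). rewrite traj_S. exact Fb.
    + intros t' Ht'. destruct (le_lt_dec t' t) as [Hle|Hlt].
      * exfalso. assert (Q := traj_mono a t' t (x,y) Hle). fold C in Q. rewrite H1 in Q.
        destruct (traj a t' (x,y)); simpl in *; try discriminate; auto.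
      * assert (Q := traj_mono a (S t) t' (x,y-1) Hlt). rewrite traj_S in Q. fold C in Q.
        rewrite Fb in Q. intro E. rewrite E in Q. destruct Q as [Q|[? Q]]; discriminate.
  - rewrite Hf in Ht2. destruct Ht2.
  - rewrite Hf in Ht2. contradiction.
Qed.

Lemma never_half_true a t m u : (traj a t u = Half false \/ isDef (traj a t u)) ->
  traj a (t+m) u <> Half true.
Proof.
  intros H E. assert (Q := traj_mono a t (t+m) u ltac:(lia)). rewrite E in Q.
  destruct H as [H|H].
  - rewrite H in Q. destruct Q as [Q|[? Q]]; discriminate.
  - destruct (traj a t u); try destruct H. discriminate.
Qed.

Lemma zeroes_persist a d : forall z y t, Z.to_nat (1 - z) = d -> y < height a ->
  (traj a t (z-1,y) = Half false \/ isDef (traj a t (z-1,y))) ->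
  (forall i, 0 <= i -> zeroish (traj a t (z+i,y))) ->
  forall m, zeroish (traj a (t+m) (z,y)).
Proof.
  induction d as [|d IH]; intros z y t Hd Hy HW HE m.
  all: destruct (Z_le_gt_dec 1 z) as [Hz|Hz];
    [ right; apply (inv_east_undef (traj_Inv a (t+m))), Hz | ].
  all: assert (H0 := HE 0 ltac:(lia)); rewrite Z.add_0_r in H0.
  - lia.
  - destruct H0 as [H0|H0].
    + assert (East : forall m, zeroish (traj a (t+m) (z+1,y))).
      { apply IH; auto; [lia| |].
        - left. replace (z+1-1) with z by lia. exact H0.
        - intros i Hi. replace (z+1+i) with (z+(i+1)) by lia. apply HE. lia. }
      left. induction m as [|m IHm]; [rewrite Nat.add_0_r; exact H0|].
      rewrite Nat.add_succ_r, traj_S. set (C := traj a (t+m)) in *.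
      step_cases C z y.
      * apply nonlocal_cond_west in Hc. exfalso. exact (never_half_true a t m _ HW Hc).
      * exfalso. destruct (nonlocal_def_inv _ _ _ _ H2) as [E|[Q _]].
        -- destruct (East m) as [E2|E2]; fold C in E2; congruence.
        -- apply nonlocal_cond_west in Q. replace (z+1-1) with z in Q by lia. congruence.
      * congruence.
      * rewrite Hf; exact IHm.
    + right. induction m as [|m IHm]; [rewrite Nat.add_0_r; exact H0|].
      rewrite Nat.add_succ_r, traj_S. set (C := traj a (t+m)) in *.
      step_cases C z y.
      * apply nonlocal_cond_west in Hc. exfalso. exact (never_half_true a t m _ HW Hc).
      * congruence.
      * (* rule (ii) needs a north-east cell that was already defined at time t *)
        apply nonlocal_half in H1. exfalso. destruct (Z.eq_dec z 0) as [->|Hz0].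
        -- exact (inv_axis_not_half (traj_Inv a (t+m)) _ _ H1).
        -- assert (Q := inv_northeast_def (traj_Inv a t) (z-1) y ltac:(lia) Hy
              ltac:(destruct HW as [HW|HW];
                    [congruence| destruct (traj a t (z-1,y)); try destruct HW; discriminate])).
           replace (z-1+1) with z in Q by lia.
           assert (Q2 := traj_mono a t (t+m) (z,y+1) ltac:(lia)). fold C in Q2. rewrite H1 in Q2.
           destruct (traj a t (z,y+1)); try destruct Q; simpl in Q2; discriminate.
      * rewrite Hf; exact IHm.
Qed.

(** If a row is defined at [x0] and never undefined west of it, it is defined
    all the way from [x0] westwards (a half-defined cell has no defined east
    neighbour in the limit). *)
Lemma row_defined a x0 y : isDef (c_inf a (x0,y)) ->
  (forall x, x < x0 -> c_inf a (x,y) <> Undef) -> forall x, x <= x0 -> isDef (c_inf a (x,y)).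
Proof.
  intros H0 NU.
  assert (D : forall j : nat, isDef (c_inf a (x0 - Z.of_nat j, y))).
  { induction j as [|j IH]; [rewrite Z.sub_0_r; exact H0|].
    assert (Q := NU (x0 - Z.of_nat (S j)) ltac:(lia)).
    destruct (c_inf a (x0 - Z.of_nat (S j), y)) eqn:E; try congruence.
    - exfalso. apply (c_inf_half_east a _ _ _ E).
      replace (x0 - Z.of_nat (S j) + 1) with (x0 - Z.of_nat j) by lia. exact IH.
    - exact I. }
  intros x Hx. replace x with (x0 - Z.of_nat (Z.to_nat (x0 - x))) by lia. apply D.
Qed.

(** The non-local rule never fires west of [x0] in a row that is defined up to
    [x0]: it would need zeroes east of the firing cell forever (by
    [zeroes_persist]), contradicting that the east neighbour ends up defined. *)
Lemma row_no_nonlocal a x0 y : x0 <= 0 -> y <= height a ->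
  (forall x, x <= x0 -> isDef (c_inf a (x,y))) ->
  (y < height a -> forall x t, x < x0 -> isDef (traj a t (x,y+1)) -> traj a t (x,y) <> Undef) ->
  forall x t, x < x0 -> ~ nonlocal_cond (traj a t) (x,y).
Proof.
  intros Hx0 Hy Row Below x t Hx Hc.
  assert (HW := nonlocal_cond_west _ _ _ Hc).
  destruct (Z.eq_dec y (height a)) as [Eq|Ne].
  - rewrite Eq in HW.
    destruct (inv_top_row (traj_Inv a t) (x-1) ltac:(lia)) as [E|[c E]]; congruence.
  - assert (Q := inv_northeast_def (traj_Inv a t) (x-1) y ltac:(lia) ltac:(lia) ltac:(congruence)).
    replace (x-1+1) with x in Q by lia.
    assert (Q2 := Below ltac:(lia) x t Hx Q).
    destruct (nonlocal_cond_zeroish _ _ Hc) as [Hz|Hz]; [|contradiction].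
    assert (ZS := zeroes_persist a (Z.to_nat (1 - (x+1))) (x+1) y t eq_refl ltac:(lia)).
    destruct (c_inf_spec a (x+1,y)) as [N HN].
    assert (Z2 : zeroish (traj a (t+N) (x+1,y))).
    { apply ZS.
      - left. replace (x+1-1) with x by lia. exact Hz.
      - intros i Hi. destruct Hc as [_ [_ Hc3]]. assert (Q3 := Hc3 (i+1) ltac:(lia)).
        replace (addv (x,y) (i+1,0)) with (x+1+i,y) in Q3 by (unfold addv; simpl; f_equal; lia).
        exact Q3. }
    rewrite HN in Z2 by lia. assert (Q4 := Row (x+1) ltac:(lia)).
    destruct Z2 as [Z2|Z2]; rewrite Z2 in Q4; exact Q4.
Qed.

Lemma row_of_adders a x0 y : x0 <= 0 -> y <= height a -> isDef (c_inf a (x0,y)) ->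
  (forall x, x < x0 -> c_inf a (x,y) <> Undef) ->
  (y < height a -> forall x t, x < x0 -> isDef (traj a t (x,y+1)) -> traj a t (x,y) <> Undef) ->
  forall x, x < x0 -> full_adder_cell a x y.
Proof.
  intros Hx0 Hy H0 NU Below x Hx.
  assert (Row := row_defined a x0 y H0 NU).
  destruct (defined_cell_origin a x y ltac:(lia) Hy (Row x ltac:(lia))) as [HR|[t Hc]]; [exact HR|].
  exfalso. exact (row_no_nonlocal a x0 y Hx0 Hy Row Below x t Hx Hc).
Qed.

Lemma column_defined a x0 y0 : x0 <= 0 -> isDef (c_inf a (x0,y0+1)) ->
  forall y, y0 < y <= height a -> isDef (c_inf a (x0,y)).
Proof.
  intros Hx0 H1.
  assert (Up : forall k : nat, y0 + 1 + Z.of_nat k <= height a ->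
                 isDef (c_inf a (x0, y0 + 1 + Z.of_nat k))).
  { induction k as [|k IH]; intro Hk; [rewrite Z.add_0_r; exact H1|].
    assert (Q := c_inf_north_def a x0 (y0 + 1 + Z.of_nat k) Hx0 ltac:(lia)
                  ltac:(intro E; rewrite E in IH; apply IH; lia)).
    replace (y0 + 1 + Z.of_nat (S k)) with (y0 + 1 + Z.of_nat k + 1) by lia. exact Q. }
  intros y Hy. replace y with (y0 + 1 + Z.of_nat (Z.to_nat (y - y0 - 1))) by lia. apply Up. lia.
Qed.

(** Row by row from the top, every cell west of a defined column is a
    full-adder cell: the top row is never undefined, and each adder row
    guarantees the same for the row below. *)
Lemma adder_rows a x0 y0 : x0 <= 0 ->
  (forall y, y0 < y <= height a -> isDef (c_inf a (x0,y))) ->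
  forall y, y0 < y <= height a -> forall x, x < x0 -> full_adder_cell a x y.
Proof.
  intros Hx0 Col.
  assert (Rows : forall j : nat, y0 < height a - Z.of_nat j ->
                   forall x, x < x0 -> full_adder_cell a x (height a - Z.of_nat j)).
  { induction j as [|j IH]; intro Hj; apply row_of_adders; try lia; try (apply Col; lia).
    - intros x Hx. rewrite Z.sub_0_r. apply (proj1 (c_inf_top_row a x ltac:(lia))).
    - intros x Hx. destruct (IH ltac:(lia) x Hx) as [s [c [s' [c' [_ [_ [_ [E4 _]]]]]]]].
      replace (height a - Z.of_nat j - 1) with (height a - Z.of_nat (S j)) in E4 by lia.
      intro E. rewrite E in E4. discriminate.
    - intros _ x t Hx HD. destruct (IH ltac:(lia) x Hx) as [s [c [s' [c' [_ [_ [_ [_ E5]]]]]]]].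
      replace (height a - Z.of_nat (S j) + 1) with (height a - Z.of_nat j) in HD by lia.
      assert (Q := E5 t HD).
      replace (height a - Z.of_nat j - 1) with (height a - Z.of_nat (S j)) in Q by lia. exact Q. }
  intros y Hy. replace y with (height a - Z.of_nat (Z.to_nat (height a - y))) by lia. apply Rows. lia.
Qed.

Definition wsum (f : nat -> nat) (K : nat) : nat := sum_nat (fun k => (f k * 2 ^ k)%nat) K.

Fixpoint horner3 (d : nat -> nat) (j : nat) : nat :=
  match j with O => O | S j' => (3 * horner3 d j' + d j')%nat end.

Lemma horner3_ext (d d' : nat -> nat) J : (forall j, d j = d' j) -> horner3 d J = horner3 d' J.
Proof. intro H. induction J as [|J IH]; simpl; auto. Qed.

Section Ripple.

Local Open Scope nat_scope.

Lemma wsum_S f K : wsum f (S K) = wsum f K + f K * 2 ^ K.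
Proof. reflexivity. Qed.

Lemma wsum_zero f K : (forall k, f k = 0) -> wsum f K = 0.
Proof. intro H. induction K as [|K IH]; [reflexivity|]. rewrite wsum_S, IH, H. lia. Qed.

(** One row of full adders multiplies by 3 and adds a digit: if the bits [f]
    plus the trits [e] (with [e (S k) = f k + c k], i.e. [x + 2x = 3x] bitwise)
    produce sum bits [g] and carries [c], then [g = 3 f + e 0] as binary numbers. *)
Lemma adder_row_times3 (f g c e : nat -> nat) K :
  (forall k, f k + e k = 2 * c k + g k) -> (forall k, e (S k) = f k + c k) ->
  f K = 0 -> c K = 0 -> wsum g (S K) = 3 * wsum f (S K) + e 0.
Proof.
  intros Hadd Htrit Hf Hc.
  assert (Balance : forall K, wsum g K + 2 * wsum c K = wsum f K + wsum e K).
  { induction K0 as [|K0 IH]; [reflexivity|]. rewrite !wsum_S.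
    assert (Q : (f K0 + e K0) * 2 ^ K0 = (2 * c K0 + g K0) * 2 ^ K0) by (rewrite Hadd; auto).
    rewrite !Nat.mul_add_distr_r in Q. nia. }
  assert (Shift : forall K, wsum e (S K) = e 0 + 2 * wsum f K + 2 * wsum c K).
  { induction K0 as [|K0 IH]; [unfold wsum; simpl; lia|].
    rewrite wsum_S, IH, !wsum_S, Htrit, Nat.pow_succ_r'. ring. }
  assert (B := Balance (S K)). rewrite Shift in B. rewrite !wsum_S, Hf, Hc in *. lia.
Qed.

(** A stack of [J] rows of full adders: row [j] holds sum bits [SB j k] and
    carries [CB j k] at distance [k] west of the column, whose trits are
    [E j 0]; the trit west of it is [E j (S k)]. *)
Variables (SB CB E : nat -> nat -> nat) (J : nat).
Hypothesis adder : forall j k, j < J -> SB j k + E j k = 2 * CB j k + SB (S j) k.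
Hypothesis trit : forall j k, j < J -> E j (S k) = SB j k + CB j k.
Hypothesis carry_bit : forall j k, CB j k <= 1.
Hypothesis top_zero : forall k, SB 0 k = 0.

(** Row [j] has no bits beyond position [2 j]: each row at most doubles the
    bit-length plus one (multiplication by 3 plus a digit). *)
Lemma ripple_support j : j <= J ->
  forall k, 1 + 2 * j <= k -> SB j k = 0 /\ (j < J -> CB j k = 0).
Proof.
  induction j as [|j IH]; intros Hj k Hk.
  - split; [apply top_zero|]. intro HJ. assert (Q := adder 0 k HJ). destruct k; [lia|].
    rewrite trit in Q by exact HJ. rewrite !top_zero in Q. specialize (carry_bit 0 k). lia.
  - assert (S0 : forall k', 2 + 2 * j <= k' -> SB (S j) k' = 0).
    { intros k' Hk'. assert (Q := adder j k' ltac:(lia)). destruct k'; [lia|].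
      rewrite trit in Q by lia. destruct (IH ltac:(lia) k' ltac:(lia)) as [A1 A2].
      destruct (IH ltac:(lia) (S k') ltac:(lia)) as [A3 A4]. rewrite A1, A2, A3 in Q by lia. lia. }
    split; [apply S0; lia|]. intro HJ. assert (Q := adder (S j) k HJ). destruct k; [lia|].
    rewrite trit in Q by exact HJ. rewrite (S0 (S k)), (S0 k) in Q by lia.
    specialize (carry_bit (S j) k). lia.
Qed.

Lemma ripple_value : wsum (SB J) (S (2 * J + 1)) = horner3 (fun j => E j 0) J.
Proof.
  assert (H : forall j, j <= J -> wsum (SB j) (S (2 * J + 1)) = horner3 (fun j => E j 0) j).
  { induction j as [|j IH]; intro Hj.
    - apply wsum_zero, top_zero.
    - simpl. rewrite <- IH by lia.
      apply (adder_row_times3 (SB j) (SB (S j)) (CB j) (E j)).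
      + intro k. apply adder. lia.
      + intro k. apply trit. lia.
      + apply (ripple_support j); lia.
      + apply (ripple_support j); lia. }
  apply H. lia.
Qed.

End Ripple.

Definition sum_at (a : tstr) (x y : Z) : nat :=
  match sum_bit (c_inf a (x,y)) with Some b => b2n b | None => 0%nat end.
Definition carry_at (a : tstr) (x y : Z) : nat :=
  match c_inf a (x,y) with Def _ c => b2n c | _ => 0%nat end.

Lemma adder_balance a x y : full_adder_cell a x y ->
  (sum_at a x y + trit_val (c_inf a ((x+1)%Z,y)) = 2 * carry_at a x y + sum_at a x (y-1)%Z)%nat.
Proof.
  intros [s [c [s' [c' [E1 [E2 [-> [E4 _]]]]]]]].
  unfold sum_at, carry_at. rewrite E1, E2, E4. destruct s, s', c'; reflexivity.
Qed.

Lemma adder_trit a x y : full_adder_cell a x y ->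
  trit_val (c_inf a (x,y)) = (sum_at a x y + carry_at a x y)%nat.
Proof. intros [s [c [s' [c' [E1 _]]]]]. unfold sum_at, carry_at. rewrite E1. reflexivity. Qed.

Lemma carry_at_bit a x y : (carry_at a x y <= 1)%nat.
Proof. unfold carry_at. destruct (c_inf a (x,y)) as [| |? []]; simpl; lia. Qed.

Lemma column_word_value (C : config) x0 y0 top :
  val3 (column_word C x0 y0 top)
  = horner3 (fun j => trit_val (C (x0, top - Z.of_nat j))) (Z.to_nat (top - y0)).
Proof.
  unfold column_word. generalize (Z.to_nat (top - y0)). intro J.
  induction J as [|J IH]; [reflexivity|].
  rewrite seq_S, map_app. unfold val3 in *. rewrite fold_left_app, IH. reflexivity.
Qed.

Lemma sum_nat_ext f g K : (forall k, f k = g k) -> sum_nat f K = sum_nat g K.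
Proof. intro H. induction K as [|K IH]; simpl; auto. Qed.

Lemma bottom_row_binary a x0 y0 : x0 <= 0 -> y0 < height a ->
  (forall y, y0 < y <= height a -> isDef (c_inf a (x0,y))) ->
  exists (b : Z -> bool) (K : nat),
    (forall x, x < x0 -> sum_bit (c_inf a (x,y0)) = Some (b x)) /\
    (forall k, (K <= k)%nat -> b (x0 - 1 - Z.of_nat k) = false) /\
    sum_nat (fun k => b2n (b (x0 - 1 - Z.of_nat k)%Z) * 2 ^ k)%nat K
      = val3 (column_word (c_inf a) x0 y0 (height a)).
Proof.
  intros Hx0 Hy0 Col.
  assert (Rows := adder_rows a x0 y0 Hx0 Col).
  set (J := Z.to_nat (height a - y0)).
  set (SB := fun j k : nat => sum_at a (x0 - 1 - Z.of_nat k) (height a - Z.of_nat j)).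
  set (CB := fun j k : nat => carry_at a (x0 - 1 - Z.of_nat k) (height a - Z.of_nat j)).
  set (E := fun j k : nat => trit_val (c_inf a (x0 - Z.of_nat k, height a - Z.of_nat j))).
  assert (Adder : forall j k, (j < J)%nat -> (SB j k + E j k = 2 * CB j k + SB (S j) k)%nat).
  { intros j k Hj. assert (Q := adder_balance a _ _ (Rows (height a - Z.of_nat j) ltac:(lia)
                                 (x0 - 1 - Z.of_nat k) ltac:(lia))).
    unfold SB, CB, E. replace (x0 - Z.of_nat k) with (x0 - 1 - Z.of_nat k + 1) by lia.
    replace (height a - Z.of_nat (S j)) with (height a - Z.of_nat j - 1) by lia. exact Q. }
  assert (Trit : forall j k, (j < J)%nat -> E j (S k) = (SB j k + CB j k)%nat).
  { intros j k Hj. unfold SB, CB, E. replace (x0 - Z.of_nat (S k)) with (x0 - 1 - Z.of_nat k) by lia.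
    apply adder_trit, Rows; lia. }
  assert (Top : forall k, SB 0%nat k = 0%nat).
  { intro k. unfold SB, sum_at. rewrite Z.sub_0_r.
    rewrite (proj2 (c_inf_top_row a (x0 - 1 - Z.of_nat k) ltac:(lia))). reflexivity. }
  assert (Carry : forall j k, (CB j k <= 1)%nat) by (intros; apply carry_at_bit).
  assert (HJ : height a - Z.of_nat J = y0) by lia.
  assert (Bot : forall x, x < x0 -> exists bb, sum_bit (c_inf a (x,y0)) = Some bb).
  { intros x Hx. destruct (Rows (y0 + 1) ltac:(lia) x Hx) as [s [c [s' [c' [_ [_ [_ [E4 _]]]]]]]].
    replace (y0 + 1 - 1) with y0 in E4 by lia. eauto. }
  set (b := fun x => match sum_bit (c_inf a (x,y0)) with Some bb => bb | None => false end).
  assert (Hb : forall k, b2n (b (x0 - 1 - Z.of_nat k)) = SB J k).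
  { intro k. unfold b, SB, sum_at. rewrite HJ.
    destruct (Bot (x0 - 1 - Z.of_nat k) ltac:(lia)) as [bb Eb]. rewrite Eb. reflexivity. }
  exists b, (S (2 * J + 1)). split; [|split].
  - intros x Hx. unfold b. destruct (Bot x Hx) as [bb Eb]. rewrite Eb. reflexivity.
  - intros k Hk. assert (Q := proj1 (ripple_support SB CB E J Adder Trit Carry Top J
                                    (le_n _) k ltac:(lia))).
    rewrite <- Hb in Q. destruct (b (x0 - 1 - Z.of_nat k)); [discriminate|reflexivity].
  - rewrite column_word_value. fold J.
    rewrite (horner3_ext _ (fun j => E j 0%nat)) by (intro j; unfold E; rewrite Z.sub_0_r; reflexivity).
    rewrite <- (ripple_value SB CB E J Adder Trit Carry Top). unfold wsum.
    apply sum_nat_ext. intro k. rewrite Hb. reflexivity.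
Qed.

Theorem mainTheorem4 (a : tstr) (x0 y0 : Z) :
  is_defined (c_inf a (addv (x0, y0) vN)) ->
  is_defined (c_inf a (addv (x0, y0) vW)) ->
  exists z : nat,
    (forall y : Z, y0 < y <= Z.of_nat (length a) -> is_defined (c_inf a (x0, y))) /\
    val3 (column_word (c_inf a) x0 y0 (Z.of_nat (length a))) = z /\
    exists (b : Z -> bool) (K : nat),
      (forall x : Z, x < x0 -> sum_bit (c_inf a (x, y0)) = Some (b x)) /\
      (forall k : nat, (K <= k)%nat -> b (x0 - 1 - Z.of_nat k) = false) /\
      sum_nat (fun k => b2n (b (x0 - 1 - Z.of_nat k)%Z) * 2 ^ k)%nat K = z.
Proof.
  intros HN _. rewrite addv_N, <- isDef_is_defined in HN.
  assert (Hx0 : x0 <= 0).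
  { destruct (Z_le_gt_dec x0 0); auto. rewrite c_inf_east_undef in HN by lia. destruct HN. }
  assert (Hy0 : y0 + 1 <= height a).
  { destruct (Z_le_gt_dec (y0+1) (height a)); auto.
    rewrite c_inf_above_undef in HN by lia. destruct HN. }
  assert (Col := column_defined a x0 y0 Hx0 HN).
  destruct (bottom_row_binary a x0 y0 Hx0 ltac:(lia) Col) as [b [K [Hbits [Hfin Hval]]]].
  exists (val3 (column_word (c_inf a) x0 y0 (height a))). split; [|split].
  - intros y Hy. apply isDef_is_defined, Col, Hy.
  - reflexivity.
  - exists b, K. auto.
Qed.
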